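(* For $1\le\ell\le r$ let \[ F_\ell(n)=z_\ell^n n^{q_\ell}\prod_{j=1}^{m_\ell}\mathcal H_{\alpha_{\ell,j}}(p_{\ell,j}n)^{e_{\ell,j}}, \] where $z_\ell,q_\ell\in\mathbb C$, $p_{\ell,j}\in\mathbb Z_{>0}$, $e_{\ell,j}\in\mathbb Z_{\ge0}$ and each $\alpha_{\ell,j}$ is a word. Let $L=\operatorname{lcm}\{p_{\ell,j}\}$ (with $L=1$ if this set is empty). Then for every positive integer $k$, \[ S_r(k)=\sum_{n_r=1}^{k}\sum_{n_{r-1}=1}^{n_r}\cdots\sum_{n_1=1}^{n_2}\prod_{\ell=1}^{r}F_\ell(n_\ell)\in\operatorname{span}_{\mathbb C}\{\mathcal H_\beta(Lk)\}_\beta, \] where $\beta$ ranges over words.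
   Context: A letter is a pair $(r,s)\in\mathbb C^2$ and a word is a finite sequence of letters. For a word $\alpha=((r_1,s_1),\ldots,(r_d,s_d))$ and a positive integer $N$, \[ \mathcal H_{\alpha}(N)=\sum_{N\ge n_1>\cdots>n_d\ge1}\prod_{i=1}^{d}\frac{s_i^{n_i}}{n_i^{r_i}},\qquad \mathcal H_\emptyset(N)=1, \] with $n^r=\exp(r\log n)$ using the real logarithm. *)

From Stdlib Require Import Reals List Arith.
From Coquelicot Require Import Coquelicot.
Import ListNotations.
Open Scope R_scope.

Definition letter : Type := (C * C)%type.
Definition word : Type := list letter.

Fixpoint Cpow_nat (s : C) (n : nat) : C :=
  match n with
  | O => RtoC 1
  | S m => Cmult s (Cpow_nat s m)
  end.

Definition Cpow_real (n : nat) (r : C) : C :=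
  let l := ln (INR n) in
  Cmult (RtoC (exp (Re r * l))) (cos (Im r * l), sin (Im r * l)).

Definition sum1 (N : nat) (f : nat -> C) : C :=
  fold_right Cplus (RtoC 0) (map f (seq 1 N)).

Definition prodl (l : list nat) (f : nat -> C) : C :=
  fold_right Cmult (RtoC 1) (map f l).

(* H_alpha(N) = sum_{N >= n_1 > ... > n_d >= 1} prod_i s_i^{n_i} / n_i^{r_i},
   computed by peeling off the outermost index n_1. *)
Fixpoint H (alpha : word) (N : nat) : C :=
  match alpha with
  | [] => RtoC 1
  | (r, s) :: rest =>
      sum1 N (fun n => Cmult (Cdiv (Cpow_nat s n) (Cpow_real n r)) (H rest (n - 1)))
  end.

Definition Fl (z q : nat -> C) (m : nat -> nat) (alpha : nat -> nat -> word)
    (p e : nat -> nat -> nat) (l n : nat) : C :=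
  Cmult (Cmult (Cpow_nat (z l) n) (Cpow_real n (q l)))
        (prodl (seq 1 (m l)) (fun j => Cpow_nat (H (alpha l j) (p l j * n)) (e l j))).

(* Nested sum: G_0(N) = 1, G_l(N) = sum_{n=1}^{N} F_l(n) G_{l-1}(n); so
   S_r(k) = G_r(k) = sum_{n_r=1}^{k} sum_{n_{r-1}=1}^{n_r} ... sum_{n_1=1}^{n_2} prod_l F_l(n_l). *)
Fixpoint nested (F : nat -> nat -> C) (l : nat) (N : nat) : C :=
  match l with
  | O => RtoC 1
  | S l' => sum1 N (fun n => Cmult (F (S l') n) (nested F l' n))
  end.

Definition Llcm (r : nat) (m : nat -> nat) (p : nat -> nat -> nat) : nat :=
  fold_right Nat.lcm 1%nat
    (flat_map (fun l => map (fun j => p l j) (seq 1 (m l))) (seq 1 r)).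

Definition Hcomb (cs : list (C * word)) (N : nat) : C :=
  fold_right Cplus (RtoC 0) (map (fun cb => Cmult (fst cb) (H (snd cb) N)) cs).

(* Let V be the C-span of the functions N |-> H_beta(N).  Summing the letter term
   s^n/n^r of (r,s) against f(n - 1) keeps V stable (it prepends the letter), and so does
   summing it against f(n): the extra diagonal terms merge (r,s) with the first letter of
   the word.  The quasi-shuffle recursion then makes V an algebra.  V is also stable under
   N |-> f(floor(N/d)): on m <= N, the indicator of d | m times s^(m/d)/(m/d)^r is a linear
   combination of the letter terms (omega^i t)^m/m^r, where t^d = s and omega is a primitive
   d-th root of unity.  Hence each factor H(p n) of F_l is the value at L n of an element
   of V, z^n n^q is the letter term of (-q, z), and induction on r shows that S_r(k) is
   the value at L k of an element of V. *)

From Stdlib Require Import Reals List Arith Lia Lra.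
From Coquelicot Require Import Coquelicot.
Import ListNotations.
Open Scope C_scope.

Lemma fold_right_Cplus_init (l : list C) c :
  fold_right Cplus c l = fold_right Cplus 0 l + c.
Proof. induction l as [|a l IH]; simpl; [ring|]. rewrite IH. ring. Qed.

Lemma sum1_0 f : sum1 0 f = 0.
Proof. reflexivity. Qed.

Lemma sum1_S N f : sum1 (S N) f = sum1 N f + f (S N).
Proof.
  unfold sum1. rewrite seq_S, map_app, fold_right_app. simpl.
  rewrite Cplus_0_r. apply fold_right_Cplus_init.
Qed.

Lemma sum1_ext N f g :
  (forall n, (1 <= n <= N)%nat -> f n = g n) -> sum1 N f = sum1 N g.
Proof.
  induction N as [|N IH]; intros Hfg; [reflexivity|].
  rewrite !sum1_S, IH, Hfg; [reflexivity|lia|intros; apply Hfg; lia].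
Qed.

Lemma sum1_plus N f g : sum1 N (fun n => f n + g n) = sum1 N f + sum1 N g.
Proof. induction N as [|N IH]; [rewrite !sum1_0; ring|]. rewrite !sum1_S, IH. ring. Qed.

Lemma sum1_scal N c f : sum1 N (fun n => c * f n) = c * sum1 N f.
Proof. induction N as [|N IH]; [rewrite !sum1_0; ring|]. rewrite !sum1_S, IH. ring. Qed.

Lemma sum1_const N c : sum1 N (fun _ => c) = INR N * c.
Proof.
  induction N as [|N IH]; [rewrite sum1_0; simpl; ring|].
  rewrite sum1_S, IH, S_INR, RtoC_plus. ring.
Qed.

Lemma Cpow_nat_Cpow s n : Cpow_nat s n = s ^ n.
Proof. reflexivity. Qed.

Lemma sum1_geom z N : (z - 1) * sum1 N (Cpow z) = z * (z ^ N - 1).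
Proof.
  induction N as [|N IH]; [rewrite sum1_0; simpl; ring|].
  rewrite sum1_S, Cmult_plus_distr_l, IH. simpl. ring.
Qed.

Lemma sum1_div d j h : (1 <= d)%nat ->
  sum1 (j / d) h = sum1 j (fun m => if (m mod d =? 0)%nat then h (m / d)%nat else 0).
Proof.
  intros Hd. induction j as [|j IH]; [rewrite Nat.Div0.div_0_l; reflexivity|].
  rewrite sum1_S, <- IH.
  pose proof (Nat.div_mod_eq j d) as Hj. pose proof (Nat.mod_upper_bound j d ltac:(lia)).
  destruct (Nat.ltb_spec (j mod d + 1) d).
  - replace (S j / d)%nat with (j / d)%nat
      by (apply (Nat.div_unique _ _ _ (j mod d + 1)); lia).
    replace (S j mod d)%nat with (j mod d + 1)%nat
      by (apply (Nat.mod_unique _ _ (j / d)); lia).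
    rewrite (proj2 (Nat.eqb_neq _ 0)) by lia. ring.
  - replace (S j / d)%nat with (S (j / d))
      by (apply (Nat.div_unique _ _ _ 0); lia).
    replace (S j mod d)%nat with 0%nat
      by (apply (Nat.mod_unique _ _ (S (j / d))); lia).
    apply sum1_S.
Qed.

Definition cis (th : R) : C := (cos th, sin th).

Lemma cis_plus a b : cis (a + b) = cis a * cis b.
Proof.
  unfold cis, Cmult; simpl. rewrite cos_plus, sin_plus. f_equal; ring.
Qed.

Lemma Cpow_cis th n : cis th ^ n = cis (INR n * th).
Proof.
  induction n as [|n IH].
  - unfold cis. simpl. rewrite Rmult_0_l, cos_0, sin_0. reflexivity.
  - simpl Cpow. rewrite IH, <- cis_plus, S_INR. f_equal. ring.
Qed.

Definition Cexp (w : C) : C := RtoC (exp (Re w)) * cis (Im w).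

Lemma Cexp_plus a b : Cexp (a + b) = Cexp a * Cexp b.
Proof.
  unfold Cexp. destruct a as [a1 a2], b as [b1 b2]; simpl.
  rewrite exp_plus, cis_plus, RtoC_mult. ring.
Qed.

Lemma Cexp_0 : Cexp 0 = 1.
Proof.
  unfold Cexp, cis. simpl. rewrite exp_0, cos_0, sin_0. apply Cmult_1_l.
Qed.

Lemma Cexp_neq_0 w : Cexp w <> 0.
Proof.
  intros E. apply C1_nz.
  rewrite <- Cexp_0, <- (Cplus_opp_r w), Cexp_plus, E. ring.
Qed.

Lemma Cpow_Cexp w n : Cexp w ^ n = Cexp (INR n * w).
Proof.
  induction n as [|n IH]; simpl Cpow.
  - rewrite Cmult_0_l. symmetry. apply Cexp_0.
  - rewrite IH, <- Cexp_plus, S_INR, RtoC_plus. f_equal. ring.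
Qed.

Lemma unit_circle_angle (a b : R) :
  (a * a + b * b = 1)%R -> exists th, cos th = a /\ sin th = b.
Proof.
  intros Hab.
  assert (Ha : (-1 <= a <= 1)%R) by nra.
  assert (Hsin : sin (acos a) = Rabs b).
  { rewrite sin_acos by exact Ha. rewrite <- sqrt_Rsqr_abs. f_equal. unfold Rsqr. lra. }
  destruct (Rle_dec 0 b) as [Hb|Hb].
  - exists (acos a). rewrite cos_acos, Hsin, Rabs_right by lra. auto.
  - exists (- acos a)%R. rewrite cos_neg, sin_neg, cos_acos, Hsin, Rabs_left by lra.
    split; [reflexivity|ring].
Qed.

Lemma Cexp_surjective (s : C) : s <> 0 -> exists w, Cexp w = s.
Proof.
  intros Hs. destruct s as [a b].
  set (rho := Cmod (a, b)).
  assert (Hrho : (0 < rho)%R) by (apply Cmod_gt_0, Hs).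
  assert (Hrho2 : (rho * rho = a * a + b * b)%R).
  { unfold rho, Cmod; simpl. rewrite sqrt_sqrt; [ring|nra]. }
  destruct (unit_circle_angle (a / rho) (b / rho)) as [th [Hc Hs']].
  { replace (a / rho * (a / rho) + b / rho * (b / rho))%R with ((a * a + b * b) / (rho * rho))%R
      by (field; lra).
    rewrite <- Hrho2. field. lra. }
  exists (ln rho, th). unfold Cexp, cis; simpl. rewrite exp_ln, Hc, Hs' by exact Hrho.
  unfold Cmult; simpl. f_equal; field; lra.
Qed.

Lemma Cpow_surjective s d : (1 <= d)%nat -> exists t, t ^ d = s.
Proof.
  intros Hd. destruct (Ceq_dec s 0) as [->|Hs].
  - exists 0. destruct d as [|d]; [lia|]. simpl. ring.
  - destruct (Cexp_surjective s Hs) as [w <-].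
    assert (Hd' : RtoC (INR d) <> 0) by (intros E; injection E; apply not_0_INR; lia).
    exists (Cexp (w / INR d)). rewrite Cpow_Cexp. f_equal. field. exact Hd'.
Qed.

Lemma Cpow_real_Cexp n r : Cpow_real n r = Cexp (r * ln (INR n)).
Proof.
  unfold Cpow_real, Cexp, cis. destruct r as [r1 r2]; simpl.
  replace (r1 * ln (INR n) - r2 * 0)%R with (r1 * ln (INR n))%R by ring.
  replace (r1 * 0 + r2 * ln (INR n))%R with (r2 * ln (INR n))%R by ring.
  reflexivity.
Qed.

Lemma Cpow_real_neq_0 n r : Cpow_real n r <> 0.
Proof. rewrite Cpow_real_Cexp. apply Cexp_neq_0. Qed.

Lemma Cpow_real_plus n a b : Cpow_real n (a + b) = Cpow_real n a * Cpow_real n b.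
Proof. rewrite !Cpow_real_Cexp, Cmult_plus_distr_r. apply Cexp_plus. Qed.

Lemma Cpow_real_0 n : Cpow_real n 0 = 1.
Proof. rewrite Cpow_real_Cexp, Cmult_0_l. apply Cexp_0. Qed.

Lemma Cpow_real_mult n k r : (1 <= n)%nat -> (1 <= k)%nat ->
  Cpow_real (n * k) r = Cpow_real n r * Cpow_real k r.
Proof.
  intros Hn Hk. rewrite !Cpow_real_Cexp, mult_INR, ln_mult, RtoC_plus, Cmult_plus_distr_l
    by (apply lt_0_INR; lia).
  apply Cexp_plus.
Qed.

Definition omega (d : nat) : C := cis (2 * PI / INR d).

Lemma Cpow_omega_d d : (1 <= d)%nat -> omega d ^ d = 1.
Proof.
  intros Hd. unfold omega. rewrite Cpow_cis.
  assert (0 < INR d)%R by (apply lt_0_INR; lia).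
  replace (INR d * (2 * PI / INR d))%R with (2 * PI)%R by (field; lra).
  unfold cis. rewrite cos_2PI, sin_2PI. reflexivity.
Qed.

Lemma Cpow_omega_neq_1 d k : (0 < k < d)%nat -> omega d ^ k <> 1.
Proof.
  intros Hk E. unfold omega in E. rewrite Cpow_cis in E. injection E as E _.
  assert (Hd : (0 < INR d)%R) by (apply lt_0_INR; lia).
  assert (Hkd : (0 < INR k < INR d)%R) by (split; [apply lt_0_INR|apply lt_INR]; lia).
  set (a := (INR k * PI / INR d)%R).
  assert (Ha : (0 < a < PI)%R).
  { pose proof PI_RGT_0. unfold a. split.
    - apply Rdiv_lt_0_compat; nra.
    - apply (Rmult_lt_reg_r (INR d)); [exact Hd|]. field_simplify; nra. }
  replace (INR k * (2 * PI / INR d))%R with (2 * a)%R in E by (unfold a; field; lra).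
  rewrite cos_2a_sin in E. pose proof (sin_gt_0 a (proj1 Ha) (proj2 Ha)). nra.
Qed.

Lemma sum1_roots_of_unity d m : (1 <= d)%nat ->
  sum1 d (Cpow (omega d ^ m)) =
  if (m mod d =? 0)%nat then RtoC (INR d) else 0.
Proof.
  intros Hd. set (z := omega d ^ m).
  assert (Hz : z = omega d ^ (m mod d)).
  { unfold z. rewrite (Nat.div_mod_eq m d) at 1.
    rewrite Cpow_add_r, Cpow_mult_r, Cpow_omega_d, Cpow_1_l by exact Hd. ring. }
  destruct (Nat.eqb_spec (m mod d) 0) as [E|E].
  - rewrite E in Hz. simpl in Hz. rewrite Hz, (sum1_ext _ _ (fun _ => 1)), sum1_const.
    + ring.
    + intros. apply Cpow_1_l.
  - assert (Hz1 : z - 1 <> 0).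
    { rewrite Hz. apply Cminus_eq_contra, Cpow_omega_neq_1.
      pose proof (Nat.mod_upper_bound m d). lia. }
    assert (Hzd : z ^ d = 1).
    { unfold z. rewrite <- Cpow_mult_r, Nat.mul_comm, Cpow_mult_r, Cpow_omega_d by exact Hd.
      apply Cpow_1_l. }
    transitivity ((z - 1) * sum1 d (Cpow z) / (z - 1)); [field; exact Hz1|].
    rewrite sum1_geom, Hzd. field. exact Hz1.
Qed.

Definition letter_term (x : letter) (n : nat) : C := snd x ^ n / Cpow_real n (fst x).

Definition letter_mult (x y : letter) : letter := (fst x + fst y, snd x * snd y).

Lemma letter_term_mult x y n :
  letter_term (letter_mult x y) n = letter_term x n * letter_term y n.
Proof.
  unfold letter_term, letter_mult; simpl. rewrite Cpow_mult_l, Cpow_real_plus.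
  field. split; apply Cpow_real_neq_0.
Qed.

Lemma H_cons x b N : H (x :: b) N = sum1 N (fun n => letter_term x n * H b (n - 1)).
Proof. destruct x. reflexivity. Qed.

Lemma H_cons_S x b N : H (x :: b) (S N) = H (x :: b) N + letter_term x (S N) * H b N.
Proof. rewrite !H_cons, sum1_S. simpl. rewrite Nat.sub_0_r. reflexivity. Qed.

Lemma H_cons_mult x a y b N :
  H (x :: a) N * H (y :: b) N =
  sum1 N (fun n => letter_term x n * (H a (n - 1) * H (y :: b) (n - 1))
                 + letter_term y n * (H (x :: a) (n - 1) * H b (n - 1))
                 + letter_term (letter_mult x y) n * (H a (n - 1) * H b (n - 1))).
Proof.
  induction N as [|N IH]; [rewrite !H_cons, !sum1_0; ring|].
  rewrite !H_cons_S, sum1_S, <- IH. simpl. rewrite Nat.sub_0_r, letter_term_mult. ring.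
Qed.

Definition Hspan (f : nat -> C) : Prop := exists cs, forall N, f N = Hcomb cs N.

Lemma Hspan_ext f g : (forall N, f N = g N) -> Hspan f -> Hspan g.
Proof. intros E [cs Hc]. exists cs. intros N. rewrite <- E. apply Hc. Qed.

Lemma Hspan_H b : Hspan (H b).
Proof. exists [(RtoC 1, b)]. intros N. unfold Hcomb; simpl. ring. Qed.

Lemma Hspan_1 : Hspan (fun _ => 1).
Proof. exact (Hspan_H []). Qed.

Lemma Hspan_0 : Hspan (fun _ => 0).
Proof. exists []. reflexivity. Qed.

Lemma Hspan_plus f g : Hspan f -> Hspan g -> Hspan (fun N => f N + g N).
Proof.
  intros [cs Hc] [ds Hd]. exists (cs ++ ds). intros N.
  rewrite Hc, Hd. unfold Hcomb. rewrite map_app, fold_right_app.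
  symmetry. apply fold_right_Cplus_init.
Qed.

Lemma Hspan_scal c f : Hspan f -> Hspan (fun N => c * f N).
Proof.
  intros [cs Hc]. exists (map (fun cb => (c * fst cb, snd cb)) cs). intros N. rewrite Hc. clear Hc.
  unfold Hcomb. induction cs as [|cb cs IH]; simpl; [ring|]. rewrite <- IH. ring.
Qed.

Lemma Hspan_ind (P : (nat -> C) -> Prop) :
  (forall f g, (forall N, f N = g N) -> P f -> P g) ->
  P (fun _ => 0) ->
  (forall c b f, P f -> P (fun N => c * H b N + f N)) ->
  forall f, Hspan f -> P f.
Proof.
  intros Pext P0 Pstep f [cs Hc].
  apply (Pext (Hcomb cs)); [intros N; symmetry; apply Hc|]. clear Hc.
  induction cs as [|[c b] cs IH]; [exact P0|]. exact (Pstep c b _ IH).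
Qed.

Lemma Hspan_sum1_lin (w : nat -> C) (g : nat -> nat) :
  (forall b, Hspan (fun N => sum1 N (fun n => w n * H b (g n)))) ->
  forall f, Hspan f -> Hspan (fun N => sum1 N (fun n => w n * f (g n))).
Proof.
  intros Hb. apply Hspan_ind.
  - intros f f' E. apply Hspan_ext. intros N. apply sum1_ext. intros n _. rewrite E. reflexivity.
  - apply (Hspan_ext (fun _ => 0)); [|exact Hspan_0].
    intros N. rewrite (sum1_ext _ _ (fun _ => 0)), sum1_const by (intros; ring). ring.
  - intros c b f Hf.
    eapply Hspan_ext; [|apply Hspan_plus; [apply (Hspan_scal c), (Hb b)|exact Hf]].
    intros N. cbv beta. rewrite <- sum1_scal, <- sum1_plus. apply sum1_ext. intros n _. ring.
Qed.

Lemma Hspan_sum1_pred x f :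
  Hspan f -> Hspan (fun N => sum1 N (fun n => letter_term x n * f (n - 1)%nat)).
Proof.
  apply (Hspan_sum1_lin _ (fun n => n - 1)%nat). intros b.
  apply (Hspan_ext (H (x :: b))); [apply H_cons|apply Hspan_H].
Qed.

Lemma sum1_letter_term_H x b N :
  sum1 N (fun n => letter_term x n * H b n) =
  H (x :: b) N + match b with [] => 0 | y :: b' => H (letter_mult x y :: b') N end.
Proof.
  destruct b as [|y b].
  - rewrite H_cons, Cplus_0_r. reflexivity.
  - rewrite !H_cons, <- sum1_plus. apply sum1_ext. intros [|n] Hn; [lia|].
    rewrite H_cons_S, letter_term_mult. simpl. rewrite Nat.sub_0_r. ring.
Qed.

Lemma Hspan_sum1 x f :
  Hspan f -> Hspan (fun N => sum1 N (fun n => letter_term x n * f n)).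
Proof.
  apply (Hspan_sum1_lin _ (fun n => n)). intros b.
  eapply Hspan_ext; [intros N; symmetry; apply sum1_letter_term_H|].
  apply Hspan_plus; [apply Hspan_H|]. destruct b; [apply Hspan_0|apply Hspan_H].
Qed.

Definition letter_comb (ws : list (C * letter)) (n : nat) : C :=
  fold_right Cplus 0 (map (fun cx => fst cx * letter_term (snd cx) n) ws).

Lemma Hspan_sum1_comb (g : nat -> nat) :
  (forall x f, Hspan f -> Hspan (fun N => sum1 N (fun n => letter_term x n * f (g n)))) ->
  forall ws f, Hspan f -> Hspan (fun N => sum1 N (fun n => letter_comb ws n * f (g n))).
Proof.
  intros Hx ws f Hf. induction ws as [|[c x] ws IH].
  - apply (Hspan_ext (fun _ => 0)); [|exact Hspan_0].
    intros N. rewrite (sum1_ext _ _ (fun _ => 0)), sum1_const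
      by (intros; unfold letter_comb; simpl; ring).
    ring.
  - eapply Hspan_ext; [|apply Hspan_plus; [apply (Hspan_scal c), (Hx x f Hf)|exact IH]].
    intros N. cbv beta. rewrite <- sum1_scal, <- sum1_plus. apply sum1_ext.
    intros n _. unfold letter_comb; simpl. ring.
Qed.

Lemma Hspan_mult_H a b : Hspan (fun N => H a N * H b N).
Proof.
  revert b. induction a as [|x a IHa]; intros b.
  - apply (Hspan_ext (H b)); [intros; simpl; ring|apply Hspan_H].
  - induction b as [|y b IHb].
    + apply (Hspan_ext (H (x :: a))); [intros; simpl; ring|apply Hspan_H].
    + eapply Hspan_ext; [intros N; symmetry; apply H_cons_mult|].
      eapply Hspan_ext; [intros N; symmetry; apply sum1_plus|].
      apply Hspan_plus; [|apply (Hspan_sum1_pred _ (fun N => H a N * H b N)), IHa].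
      eapply Hspan_ext; [intros N; symmetry; apply sum1_plus|].
      apply Hspan_plus.
      * apply (Hspan_sum1_pred _ (fun N => H a N * H (y :: b) N)), IHa.
      * apply (Hspan_sum1_pred _ (fun N => H (x :: a) N * H b N)), IHb.
Qed.

Lemma Hspan_mult_H_l a g : Hspan g -> Hspan (fun N => H a N * g N).
Proof.
  revert g. apply Hspan_ind.
  - intros g g' E. apply Hspan_ext. intros N. rewrite E. reflexivity.
  - apply (Hspan_ext (fun _ => 0)); [intros; ring|exact Hspan_0].
  - intros c b g Hg.
    eapply Hspan_ext; [|apply Hspan_plus; [apply (Hspan_scal c), (Hspan_mult_H a b)|exact Hg]].
    intros N. cbv beta. ring.
Qed.

Lemma Hspan_mult f g : Hspan f -> Hspan g -> Hspan (fun N => f N * g N).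
Proof.
  intros Hf Hg. revert f Hf. apply Hspan_ind.
  - intros f f' E. apply Hspan_ext. intros N. rewrite E. reflexivity.
  - apply (Hspan_ext (fun _ => 0)); [intros; ring|exact Hspan_0].
  - intros c b f Hf.
    eapply Hspan_ext; [|apply Hspan_plus; [apply (Hspan_scal c), (Hspan_mult_H_l b g Hg)|exact Hf]].
    intros N. cbv beta. ring.
Qed.

Lemma letter_comb_div d x : (1 <= d)%nat -> exists ws, forall m, (1 <= m)%nat ->
  letter_comb ws m = if (m mod d =? 0)%nat then letter_term x (m / d) else 0.
Proof.
  intros Hd. destruct x as [r s]. destruct (Cpow_surjective s d Hd) as [t Ht].
  (* With t^d = s: sum_{i=1}^d (omega^i t)^m / m^r = d [d | m] t^m / m^r. *)
  set (K := Cpow_real d r / INR d).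
  exists (map (fun i => (K, (r, omega d ^ i * t))) (seq 1 d)). intros m Hm.
  transitivity (sum1 d (fun i => K * letter_term (r, omega d ^ i * t) m)).
  { unfold letter_comb, sum1. rewrite map_map. reflexivity. }
  rewrite (sum1_ext _ _ (fun i => K * (t ^ m / Cpow_real m r) * (omega d ^ m) ^ i)).
  2:{ intros i _. unfold letter_term; simpl.
      rewrite Cpow_mult_l, <- !Cpow_mult_r, Nat.mul_comm. field. apply Cpow_real_neq_0. }
  rewrite sum1_scal, sum1_roots_of_unity by exact Hd.
  destruct (Nat.eqb_spec (m mod d) 0) as [E|E]; [|ring].
  pose proof (Nat.div_mod_eq m d) as Hdm. rewrite E, Nat.add_0_r in Hdm.
  set (c := (m / d)%nat) in *.
  assert (Hc : (1 <= c)%nat) by (destruct c; lia).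
  rewrite Hdm at 1 2. rewrite Cpow_mult_r, Ht, Cpow_real_mult by assumption.
  unfold K, letter_term; simpl.
  assert (Hd' : RtoC (INR d) <> 0) by (intros E'; injection E'; apply not_0_INR; lia).
  field. repeat split; try apply Cpow_real_neq_0. exact Hd'.
Qed.

Lemma sum1_letter_term_div d x : (1 <= d)%nat -> exists ws, forall j g g',
  (forall c, (1 <= c)%nat -> g' (d * c)%nat = g c) ->
  sum1 (j / d) (fun c => letter_term x c * g c) = sum1 j (fun m => letter_comb ws m * g' m).
Proof.
  intros Hd. destruct (letter_comb_div d x Hd) as [ws Hws]. exists ws. intros j g g' Hg.
  rewrite sum1_div by exact Hd. apply sum1_ext. intros m Hm. rewrite Hws by lia.
  destruct (Nat.eqb_spec (m mod d) 0) as [E|E]; [|ring].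
  pose proof (Nat.div_mod_eq m d) as Hdm. rewrite E, Nat.add_0_r in Hdm.
  rewrite <- Hg, <- Hdm; [reflexivity|]. destruct (m / d)%nat; lia.
Qed.

Lemma Hspan_H_div d a : (1 <= d)%nat -> Hspan (fun N => H a (N / d)).
Proof.
  intros Hd. induction a as [|x a IH]; [exact Hspan_1|].
  destruct (sum1_letter_term_div d x Hd) as [ws Hws].
  eapply Hspan_ext; [|exact (Hspan_sum1_comb (fun n => n - 1)%nat Hspan_sum1_pred ws _ IH)].
  intros N. cbv beta. rewrite H_cons. symmetry. apply Hws.
  intros c Hc. f_equal. symmetry. apply (Nat.div_unique _ _ _ (d - 1)); nia.
Qed.

Definition Hspan_scaled (L : nat) (F : nat -> C) : Prop :=
  exists f, Hspan f /\ forall n, F n = f (L * n)%nat.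

Lemma Hspan_scaled_ext L F G : (forall n, F n = G n) -> Hspan_scaled L F -> Hspan_scaled L G.
Proof. intros E [f [Hf HF]]. exists f. split; [exact Hf|]. intros n. rewrite <- E. apply HF. Qed.

Lemma Hspan_scaled_1 L : Hspan_scaled L (fun _ => 1).
Proof. exists (fun _ => 1). split; [exact Hspan_1|reflexivity]. Qed.

Lemma Hspan_scaled_mult L F G :
  Hspan_scaled L F -> Hspan_scaled L G -> Hspan_scaled L (fun n => F n * G n).
Proof.
  intros [f [Hf HF]] [g [Hg HG]]. exists (fun N => f N * g N).
  split; [exact (Hspan_mult f g Hf Hg)|]. intros n. rewrite HF, HG. reflexivity.
Qed.

Lemma Hspan_scaled_pow L F e : Hspan_scaled L F -> Hspan_scaled L (fun n => F n ^ e).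
Proof.
  intros HF. induction e as [|e IH]; [exact (Hspan_scaled_1 L)|].
  exact (Hspan_scaled_mult L F _ HF IH).
Qed.

Lemma Hspan_scaled_prodl L (J : list nat) (G : nat -> nat -> C) :
  (forall j, In j J -> Hspan_scaled L (G j)) ->
  Hspan_scaled L (fun n => prodl J (fun j => G j n)).
Proof.
  induction J as [|j J IH]; intros HG; [exact (Hspan_scaled_1 L)|].
  apply (Hspan_scaled_mult L (G j)); [apply HG; left; reflexivity|].
  apply IH. intros i Hi. apply HG. right. exact Hi.
Qed.

Lemma Hspan_scaled_H L p a : (1 <= L)%nat -> Nat.divide p L ->
  Hspan_scaled L (fun n => H a (p * n)).
Proof.
  intros HL [d Hd]. exists (fun N => H a (N / d)). split.
  - apply Hspan_H_div. destruct d; lia.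
  - intros n. rewrite Hd, <- Nat.mul_assoc, (Nat.mul_comm d), Nat.div_mul by (destruct d; lia).
    reflexivity.
Qed.

Lemma Hspan_scaled_sum1 L y F : (1 <= L)%nat -> Hspan_scaled L F ->
  Hspan_scaled L (fun k => sum1 k (fun n => letter_term y n * F n)).
Proof.
  intros HL [f [Hf HF]]. destruct (sum1_letter_term_div L y HL) as [ws Hws].
  exists (fun N => sum1 N (fun m => letter_comb ws m * f m)). split.
  - exact (Hspan_sum1_comb (fun n => n) Hspan_sum1 ws f Hf).
  - intros k. replace k with (L * k / L)%nat at 1 by (rewrite Nat.mul_comm, Nat.div_mul; lia).
    apply Hws. intros c _. symmetry. apply HF.
Qed.

Lemma fold_right_lcm_divide x l : In x l -> Nat.divide x (fold_right Nat.lcm 1%nat l).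
Proof.
  induction l as [|a l IH]; simpl; [tauto|]. intros [->|Hx].
  - apply Nat.divide_lcm_l.
  - eapply Nat.divide_trans; [exact (IH Hx)|apply Nat.divide_lcm_r].
Qed.

Lemma fold_right_lcm_pos l :
  (forall x, In x l -> (0 < x)%nat) -> (0 < fold_right Nat.lcm 1%nat l)%nat.
Proof.
  induction l as [|a l IH]; simpl; intros Hl; [lia|].
  enough (Nat.lcm a (fold_right Nat.lcm 1%nat l) <> 0%nat) by lia.
  rewrite Nat.lcm_eq_0. pose proof (Hl a (or_introl eq_refl)).
  pose proof (IH (fun x Hx => Hl x (or_intror Hx))). lia.
Qed.

Lemma Llcm_divide r m p l j : (1 <= l <= r)%nat -> (1 <= j <= m l)%nat ->
  Nat.divide (p l j) (Llcm r m p).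
Proof.
  intros Hl Hj. apply fold_right_lcm_divide, in_flat_map. exists l.
  split; [apply in_seq; lia|]. apply in_map, in_seq. lia.
Qed.

Lemma Llcm_pos r m p :
  (forall l j, (1 <= l <= r)%nat -> (1 <= j <= m l)%nat -> (0 < p l j)%nat) ->
  (1 <= Llcm r m p)%nat.
Proof.
  intros Hp. apply fold_right_lcm_pos. intros x Hx.
  apply in_flat_map in Hx as [l [Hl Hx]]. apply in_map_iff in Hx as [j [<- Hj]].
  apply in_seq in Hl, Hj. apply Hp; lia.
Qed.

Lemma letter_term_opp z q n : z ^ n * Cpow_real n q = letter_term (- q, z) n.
Proof.
  unfold letter_term; simpl.
  assert (Hq : Cpow_real n (- q) * Cpow_real n q = 1)
    by (rewrite <- Cpow_real_plus, Cplus_comm, Cplus_opp_r; apply Cpow_real_0).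
  pose proof (Cpow_real_neq_0 n (- q)).
  transitivity (z ^ n * (Cpow_real n (- q) * Cpow_real n q) / Cpow_real n (- q)).
  - field. assumption.
  - rewrite Hq. field. assumption.
Qed.

Lemma Fl_letter_term z q m alpha p e l n :
  Fl z q m alpha p e l n =
  letter_term (- q l, z l) n * prodl (seq 1 (m l)) (fun j => H (alpha l j) (p l j * n) ^ e l j).
Proof.
  unfold Fl. rewrite Cpow_nat_Cpow, letter_term_opp. reflexivity.
Qed.

Lemma Hspan_scaled_nested r z q m alpha p e L : (1 <= L)%nat ->
  (forall l j, (1 <= l <= r)%nat -> (1 <= j <= m l)%nat -> Nat.divide (p l j) L) ->
  Hspan_scaled L (nested (Fl z q m alpha p e) r).
Proof.
  intros HL. induction r as [|r IH]; intros Hdiv; [exact (Hspan_scaled_1 L)|].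
  set (P n := prodl (seq 1 (m (S r))) (fun j => H (alpha (S r) j) (p (S r) j * n) ^ e (S r) j)).
  apply (Hspan_scaled_ext L (fun k => sum1 k (fun n =>
           letter_term (- q (S r), z (S r)) n * (P n * nested (Fl z q m alpha p e) r n)))).
  { intros k. apply sum1_ext. intros n _. rewrite Fl_letter_term. apply Cmult_assoc. }
  apply Hspan_scaled_sum1; [exact HL|]. apply Hspan_scaled_mult.
  - apply Hspan_scaled_prodl. intros j Hj. apply in_seq in Hj.
    apply Hspan_scaled_pow, Hspan_scaled_H; [exact HL|]. apply Hdiv; lia.
  - apply IH. intros l j Hl Hj. apply Hdiv; lia.
Qed.

Theorem theorem7p1 (r : nat) (z q : nat -> C) (m : nat -> nat)
    (alpha : nat -> nat -> word) (p e : nat -> nat -> nat) :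
  (1 <= r)%nat ->
  (forall l j, (1 <= l <= r)%nat -> (1 <= j <= m l)%nat -> (0 < p l j)%nat) ->
  exists cs : list (C * word),
    forall k : nat, (1 <= k)%nat ->
      nested (Fl z q m alpha p e) r k = Hcomb cs (Llcm r m p * k).
Proof.
  intros _ Hp.
  destruct (Hspan_scaled_nested r z q m alpha p e (Llcm r m p)) as [f [[cs Hcs] Hf]].
  - exact (Llcm_pos r m p Hp).
  - intros l j. apply Llcm_divide.
  - exists cs. intros k _. rewrite Hf. apply Hcs.
Qed.
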